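(* Let $n\geq 2$ and $k\in\{0,1,\ldots,n\}$ be integers. For $x\in[0,1]$ let $c(x)=-\min\{x,1-x\}/(n-1)$ and $$p_{n,k}(x)=\binom{n}{k}\frac{x^{(k,c(x))}\,(1-x)^{(n-k,c(x))}}{1^{(n,c(x))}}.$$ Then $p_{n,k}$ is increasing on $[0,x^*_{n,k}]$ and decreasing on $[x^*_{n,k},1]$, where $$x^*_{n,k}=\begin{cases} x_{n,k}, & \text{if } k\leq \frac{n-1}{2},\\ \frac12, & \text{if } \frac{n-1}{2}<k<\frac{n+1}{2},\\ 1-x_{n,n-k}, & \text{if } k\geq\frac{n+1}{2},\end{cases}$$ and the numbers $x_{n,j}\in\left[\frac{j-1}{n-1},\frac{j}{n-1}\right]$, $j\in\{0,\ldots,n-1\}$, are as defined in the context.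
   Context: For real $y$ and $h$, the rising factorial with increment $h$ is $y^{(0,h)}=1$ and $y^{(m,h)}=y(y+h)\cdots(y+(m-1)h)$ for integers $m\geq1$. The quantity $p_{n,k}(x)$ is the probability that $k$ white balls are drawn in $n$ draws from a Pólya urn initially containing $x$ white and $1-x$ black ''balls'', where after each draw the drawn ball is returned together with $c(x)$ balls of the same colour. For integers $n\geq 2$ and $j\in\{0,\ldots,n-1\}$, let $$\varphi_{n,j}(x)=\sum_{i=0}^{n-1}\frac{1}{1-\frac{i}{n-1}x}-\sum_{i=0}^{n-j-1}\frac{1}{1-x-\frac{i}{n-1}x},\qquad x\in\left[0,\tfrac{n-1}{2n-j-2}\right),$$ and let $x_{n,j}$ be the (unique) number in $\left[\frac{j-1}{n-1},\frac{j}{n-1}\right]$ such that $\varphi_{n,j}$ is positive on $[0,x_{n,j})$ and negative on $\left(x_{n,j},\frac{n-1}{2n-j-2}\right)$; such a number exists. *)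

From HB Require Import structures.
From mathcomp Require Import all_boot all_order all_algebra.
From mathcomp Require Import boolp classical_sets reals.
Set Implicit Arguments. Unset Strict Implicit. Unset Printing Implicit Defensive.
Import Order.TTheory GRing.Theory Num.Theory.
Local Open Scope ring_scope.

Definition rising (R : pzRingType) (y h : R) (m : nat) : R :=
  \prod_(i < m) (y + i%:R * h).

Definition cpol (R : realType) (n : nat) (x : R) : R :=
  - Num.min x (1 - x) / (n%:R - 1).

Definition pnk (R : realType) (n k : nat) (x : R) : R :=
  'C(n, k)%:R * rising x (cpol n x) k * rising (1 - x) (cpol n x) (n - k)
    / rising 1 (cpol n x) n.

Definition phi (R : realType) (n j : nat) (x : R) : R :=
  \sum_(i < n) (1 - i%:R / (n%:R - 1) * x)^-1
  - \sum_(i < n - j) (1 - x - i%:R / (n%:R - 1) * x)^-1.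

(* right end of the domain of phi_{n,j}: (n-1)/(2n-j-2) *)
Definition phi_bound (R : realType) (n j : nat) : R :=
  (n%:R - 1) / (2 * n%:R - j%:R - 2).

Definition is_xnj (R : realType) (n j : nat) (x : R) : Prop :=
  [/\ (j%:R - 1) / (n%:R - 1) <= x <= j%:R / (n%:R - 1),
      (forall y : R, 0 <= y -> y < x -> 0 < phi n j y) &
      (forall y : R, 0 <= y -> x < y -> y < phi_bound R n j -> phi n j y < 0)].

Definition xnj (R : realType) (n j : nat) : R := xget 0 [set x | is_xnj n j x].

Definition xstar (R : realType) (n k : nat) : R :=
  if k%:R <= (n%:R - 1) / 2 :> R then xnj R n k
  else if k%:R < (n%:R + 1) / 2 :> R then 1 / 2
  else 1 - xnj R n (n - k).

From HB Require Import structures.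
From mathcomp Require Import all_boot all_order all_algebra.
From mathcomp Require Import boolp classical_sets functions reals.
From mathcomp Require Import topology normedtype derive realfun exp.
From mathcomp Require Import ring lra zify.
Import Order.TTheory GRing.Theory Num.Theory.
Import numFieldNormedType.Exports.
Local Open Scope ring_scope.
Local Open Scope classical_set_scope.

(* For x <= 1/2 we have c(x) = -x/(n-1), so p_{n,k} is a ratio of products of
   affine functions of x whose logarithmic derivative is phi_{n,k}(x)/x; on
   [1/2, 1] one uses p_{n,k}(1 - x) = p_{n,n-k}(x). Everything thus reduces to
   the sign of phi_{n,j} on (0, 1/2): it changes sign at most once, from + to -,
   and comparing its two sums with integrals of t |-> s/(1 - t s) places the
   change in [(j-1)/(n-1), j/(n-1)] when 2j < n, while for 2j >= n it does not
   happen before 1/2. *)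

Ltac field_nonzero :=
  repeat (apply/andP; split);
  first [apply/lt0r_neq0; lra | apply/ltr0_neq0; lra
        | apply/lt0r_neq0; nra | apply/ltr0_neq0; nra].

Section RealCalculus.
Context {R : realType}.
Implicit Types (a b c h r s t x y : R) (f df : R -> R).

Lemma is_derive_ge0_ndecr f df a b :
  (forall x, a <= x <= b -> derivable f x 1) ->
  (forall x, a < x < b -> is_derive x 1 f (df x)) ->
  (forall x, a < x < b -> 0 <= df x) ->
  forall x y, a <= x -> x <= y -> y <= b -> f x <= f y.
Proof.
move=> fdrv fdf df_ge0; apply: ger0_derive1_ndecr.
- by move=> x; rewrite in_itv /= => /fdf fx; exact: ex_derive.
- move=> x; rewrite in_itv /= derive1E => xab.
  by have fx := fdf x xab; rewrite derive_val df_ge0.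
- by apply: derivable_within_continuous => x; rewrite in_itv /=; exact: fdrv.
Qed.

Lemma is_derive_le0_nincr f df a b :
  (forall x, a <= x <= b -> derivable f x 1) ->
  (forall x, a < x < b -> is_derive x 1 f (df x)) ->
  (forall x, a < x < b -> df x <= 0) ->
  forall x y, a <= x -> x <= y -> y <= b -> f y <= f x.
Proof.
move=> fdrv fdf df_le0 x y ax xy yb; rewrite -lerN2.
apply: (@is_derive_ge0_ndecr (- f) (- df) a b _ _ _ x y ax xy yb) => z zab.
- exact/derivableN/fdrv.
- exact/is_deriveN/fdf.
- by rewrite /= oppr_ge0 df_le0.
Qed.

Lemma is_derive_affine a b x : is_derive x 1 (fun y => a + b * y) b.
Proof.
have h : is_derive x 1 (cst a + b \*: id) (0 + b *: (1 : R)) by typeclasses eauto.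
by rewrite add0r /GRing.scale /= mulr1 in h.
Qed.

Lemma ln_ge_ratio r : 1 <= r -> 2 * (r - 1) / (r + 1) <= ln r.
Proof.
move=> r1; pose F y := ln y + 4 * (1 + 1 * y)^-1.
have dF t : 0 < t -> is_derive t 1 F ((t - 1) ^+ 2 / (t * (1 + t) ^+ 2)).
  move=> t0; have t1 : 1 + 1 * t != 0 by apply/lt0r_neq0; lra.
  apply: is_derive_eq (is_deriveD (is_derive1_ln t0)
    (is_deriveZ 4 (is_deriveV (f := fun y => 1 + 1 * y) t1 (is_derive_affine 1 1 t)))) _.
  by rewrite /GRing.scale /=; field; field_nonzero.
have : F 1 <= F r.
  apply: (@is_derive_ge0_ndecr F (fun t => (t - 1) ^+ 2 / (t * (1 + t) ^+ 2)) 1 r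
    _ _ _ 1 r (lexx _) r1 (lexx _)).
  - by move=> t /andP[t1 _]; have := dF t (lt_le_trans ltr01 t1); case.
  - by move=> t /andP[t1 _]; apply: dF; lra.
  - move=> t /andP[t1 _]; apply: divr_ge0; first exact: sqr_ge0.
    by apply: mulr_ge0; [lra | exact: sqr_ge0].
rewrite /F ln1 !mul1r add0r.
have -> : 2 * (r - 1) / (r + 1) = 2 - 4 * (1 + r)^-1 by field; field_nonzero.
have : 4 * (1 + 1)^-1 = 2 :> R by field.
lra.
Qed.

Lemma ln_le_ratio r : 1 <= r -> ln r <= (r - r^-1) / 2.
Proof.
move=> r1; pose G y := 2^-1 * (y - y^-1) - ln y.
have dG t : 0 < t -> is_derive t 1 G ((t - 1) ^+ 2 / (2 * t ^+ 2)).
  move=> t0; have t1 : id t != 0 by apply/lt0r_neq0.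
  apply: is_derive_eq (is_deriveB (is_deriveZ 2^-1 (is_deriveB (is_derive_id t 1)
    (is_deriveV (f := id) t1 (is_derive_id t 1)))) (is_derive1_ln t0)) _.
  by rewrite /GRing.scale /=; field; field_nonzero.
have : G 1 <= G r.
  apply: (@is_derive_ge0_ndecr G (fun t => (t - 1) ^+ 2 / (2 * t ^+ 2)) 1 r
    _ _ _ 1 r (lexx _) r1 (lexx _)).
  - by move=> t /andP[t1 _]; have := dG t (lt_le_trans ltr01 t1); case.
  - by move=> t /andP[t1 _]; apply: dG; lra.
  - move=> t /andP[t1 _]; apply: divr_ge0; first exact: sqr_ge0.
    by apply: mulr_ge0; [lra | exact: sqr_ge0].
rewrite /G ln1 invr1 subrr mulr0 subr0; lra.
Qed.

Lemma ln_sub_ge_midpoint y h : 0 < h -> h < y -> 2 * h / y <= ln (y + h) - ln (y - h).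
Proof.
move=> h0 hy; have r1 : 1 <= (y + h) / (y - h) by rewrite ler_pdivlMr; lra.
have := ln_ge_ratio _ r1; rewrite ln_div ?posrE; [|lra|lra].
by have -> : 2 * ((y + h) / (y - h) - 1) / ((y + h) / (y - h) + 1) = 2 * h / y
  by field; field_nonzero.
Qed.

Lemma ln_sub_le_trapezoid a b : 0 < b -> b <= a ->
  ln a - ln b <= (a - b) * (a^-1 + b^-1) / 2.
Proof.
move=> b0 ba; have r1 : 1 <= a / b by rewrite ler_pdivlMr; lra.
have := ln_le_ratio _ r1; rewrite ln_div ?posrE; [|lra|lra].
by have -> : (a / b - (a / b)^-1) / 2 = (a - b) * (a^-1 + b^-1) / 2
  by field; field_nonzero.
Qed.

(* Midpoint and trapezoid rules for the convex integrand [t |-> s / (1 - t s)],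
   whose integral is a difference of logarithms. *)
Lemma sum_inv_affine_le_ln s c (N : nat) : 0 < s -> 0 < 1 - (c + N%:R - 2^-1) * s ->
  s * \sum_(i < N) (1 - (c + i%:R) * s)^-1 <=
  ln (1 - (c - 2^-1) * s) - ln (1 - (c + N%:R - 2^-1) * s).
Proof.
move=> s0; elim: N => [|N IH] hN; first by rewrite big_ord0 mulr0 addr0 subrr.
rewrite big_ord_recr /= mulrDr -natr1 in hN *.
have := IH ltac:(nra).
have := @ln_sub_ge_midpoint (1 - (c + N%:R) * s) (s / 2) ltac:(lra) ltac:(nra).
have -> : 2 * (s / 2) / (1 - (c + N%:R) * s) = s * (1 - (c + N%:R) * s)^-1
  by field; field_nonzero.
have -> : 1 - (c + N%:R) * s + s / 2 = 1 - (c + N%:R - 2^-1) * s by field.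
have -> : 1 - (c + N%:R) * s - s / 2 = 1 - (c + (N%:R + 1) - 2^-1) * s by field.
lra.
Qed.

Lemma sum_inv_affine_ge_ln s c (N : nat) : 0 < s -> 0 < 1 - (c + N%:R) * s ->
  ln (1 - c * s) - ln (1 - (c + N%:R) * s)
    + s / 2 * ((1 - c * s)^-1 + (1 - (c + N%:R) * s)^-1)
  <= s * \sum_(i < N.+1) (1 - (c + i%:R) * s)^-1.
Proof.
move=> s0; elim: N => [|N IH] hN.
  rewrite big_ord1 addr0 subrr add0r le_eqVlt; apply/orP; left; apply/eqP.
  by field; field_nonzero.
rewrite big_ord_recr /= mulrDr -natr1 in hN *.
have hN' : 0 < 1 - (c + N%:R) * s by nra.
have := IH hN'.
have := @ln_sub_le_trapezoid (1 - (c + N%:R) * s) (1 - (c + (N%:R + 1)) * s)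
  hN ltac:(nra).
have -> : 1 - (c + N%:R) * s - (1 - (c + (N%:R + 1)) * s) = s by ring.
lra.
Qed.

End RealCalculus.

Section InvAffineRatio.
Context {F : realFieldType}.
Implicit Types g : F.

Lemma ratio_inv_affine_subE g (x1 x2 : F) : x2 < 1 -> 0 < 1 - g * x1 -> 0 < 1 - g * x2 ->
  (1 - x1) / (1 - x2) * (1 - g * x1)^-1 - (1 - g * x2)^-1
  = (x2 - x1) * (1 - g) / ((1 - x2) * (1 - g * x1) * (1 - g * x2)).
Proof. by move=> x21 h1 h2; field; field_nonzero. Qed.

Lemma inv_affine_le_ratio g (x1 x2 : F) : 0 <= g <= 1 -> 0 <= x1 <= x2 -> x2 < 1 ->
  (1 - g * x2)^-1 <= (1 - x1) / (1 - x2) * (1 - g * x1)^-1.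
Proof.
move=> /andP[g0 g1] /andP[x10 x12] x21.
have h1 : 0 < 1 - g * x1 by nra.
have h2 : 0 < 1 - g * x2 by nra.
rewrite -subr_ge0 ratio_inv_affine_subE //; apply: divr_ge0; first nra.
by apply: mulr_ge0; [apply: mulr_ge0|]; lra.
Qed.

Lemma ratio_le_inv_affine g (x1 x2 : F) : 1 <= g -> 0 <= x1 <= x2 -> 0 < 1 - g * x2 ->
  (1 - x1) / (1 - x2) * (1 - g * x1)^-1 <= (1 - g * x2)^-1.
Proof.
move=> g1 /andP[x10 x12] h2.
have h1 : 0 < 1 - g * x1 by nra.
rewrite -subr_le0 ratio_inv_affine_subE; [|nra|lra|lra].
apply: mulr_le0_ge0; first nra.
by rewrite invr_ge0; apply: mulr_ge0; [apply: mulr_ge0|]; nra.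
Qed.

End InvAffineRatio.

Lemma midpoint_trapezoid_gap_le0 (F : realFieldType) (q s e : F) :
  2^-1 <= q <= 1 -> 0 < e <= 2^-1 -> s = (1 - q) * e ->
  s / 2 + (s / 2) / (q - s / 2) - s / 2 * (q^-1 + (q ^+ 2)^-1) <= 0.
Proof.
move=> /andP[q1 q2] /andP[e0 e1] se.
have s0 : 0 <= s by rewrite se; apply: mulr_ge0; lra.
have s1 : s <= 2^-1 * 2^-1 by rewrite se; nra.
have -> : s / 2 + (s / 2) / (q - s / 2) - s / 2 * (q^-1 + (q ^+ 2)^-1)
   = (s / 2) * ((1 - q) * (- q * (1 + q) + e / 2 * (1 + q - q ^+ 2)))
     / (q ^+ 2 * (q - s / 2)).
  by rewrite se; field; field_nonzero.
apply: mulr_le0_ge0; last by rewrite invr_ge0; apply: mulr_ge0; [exact: sqr_ge0 | lra].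
by apply: mulr_ge0_le0; [lra | apply: mulr_ge0_le0; [lra | nra]].
Qed.

Lemma sumr_ord_pairs (V : nmodType) (F : nat -> V) (N : nat) :
  \sum_(i < N + N) F i = \sum_(i < N) (F (i + i)%N + F (i + i).+1).
Proof.
elim: N => [|N IH]; first by rewrite !big_ord0.
by rewrite addSn addnS !big_ord_recr /= IH addrA.
Qed.

Section SignOfPhi.
Context {R : realType}.
Context {n : nat}.
Hypothesis n_ge2 : (2 <= n)%N.
Local Notation m := (n%:R - 1 : R).

Lemma m_ge1 : 1 <= m.
Proof. have : (2%:R : R) <= n%:R by rewrite ler_nat. lra. Qed.

Lemma natr_le_m j : (j <= n - 1)%N -> (j%:R : R) <= m.
Proof.
move=> jn; have : (j%:R : R) <= (n - 1)%:R by rewrite ler_nat.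
by rewrite natrB //; lia.
Qed.

Lemma natr_div_m_ge0_le1 i : (i < n)%N -> 0 <= (i%:R : R) / m <= 1.
Proof.
move=> ilt; have := m_ge1; have := natr_le_m i ltac:(lia) => im m1.
by rewrite divr_ge0 ?ler_pdivrMr ?mul1r //=; lra.
Qed.

Lemma natr_le_m_sub j i : (i < n - j)%N -> (i%:R : R) <= m - j%:R.
Proof.
move=> ilt; have : ((i + j)%:R : R) <= m by apply: natr_le_m; lia.
by rewrite natrD; lra.
Qed.

Lemma phi0 j : (j <= n)%N -> phi n j (0 : R) = j%:R.
Proof.
move=> jn; rewrite /phi.
under eq_bigr do rewrite mulr0 subr0 invr1.
under [X in _ - X]eq_bigr do rewrite mulr0 !subr0 invr1.
by rewrite !sumr_const !card_ord natrB // subKr.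
Qed.

Lemma phi_bound_eq j : phi_bound R n j = m / (2 * m - j%:R).
Proof. by rewrite /phi_bound; congr (_ / _); ring. Qed.

(* Multiplying [phi x1] by [rho = (1 - x1) / (1 - x2) > 1] makes every term of
   the first sum dominate its value at [x2] (strictly for [i = 0]) and every
   term of the second sum be dominated by its value at [x2]. *)
Lemma phi_single_crossing j (x1 x2 : R) : (j <= n - 1)%N -> 0 <= x1 -> x1 < x2 ->
  x2 * (2 * m - j%:R) < m -> phi n j x1 <= 0 -> phi n j x2 < 0.
Proof.
move=> jn x10 x12 x2b phi_le0.
have m1 := m_ge1; have jm := natr_le_m _ jn.
have x21 : x2 < 1 by nra.
set rho := (1 - x1) / (1 - x2).
have rho1 : 1 < rho by rewrite /rho ltr_pdivlMr; lra.
have first_sum : \sum_(i < n) (1 - i%:R / m * x2)^-1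
                 < rho * \sum_(i < n) (1 - i%:R / m * x1)^-1.
  pose i0 : 'I_n := Ordinal (ltnW n_ge2).
  rewrite mulr_sumr (bigD1 i0) //= [X in _ < X](bigD1 i0) //= !mul0r !subr0 invr1 mulr1.
  apply: ltr_leD => //; apply: ler_sum => i _.
  apply: inv_affine_le_ratio => //; last by apply/andP; split; lra.
  exact: natr_div_m_ge0_le1.
have second_sum : rho * \sum_(i < n - j) (1 - x1 - i%:R / m * x1)^-1
                  <= \sum_(i < n - j) (1 - x2 - i%:R / m * x2)^-1.
  rewrite mulr_sumr; apply: ler_sum => i _.
  have im := natr_le_m_sub _ _ (ltn_ord i).
  have /andP[g0 _] := natr_div_m_ge0_le1 _ (leq_trans (ltn_ord i) (leq_subr j n)).
  have gm : i%:R / m * m = i%:R by rewrite divfK //; apply/lt0r_neq0; lra.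
  have affE x : 1 - x - i%:R / m * x = 1 - (1 + i%:R / m) * x by ring.
  rewrite !affE; apply: ratio_le_inv_affine; [lra | apply/andP; split; lra |].
  rewrite -(pmulr_lgt0 _ (_ : 0 < m)); last lra.
  have -> : (1 - (1 + i%:R / m) * x2) * m = m - x2 * m - x2 * (i%:R / m * m) by ring.
  by rewrite gm; nra.
have : rho * phi n j x1 <= 0 by rewrite pmulr_rle0 //; lra.
by rewrite /phi mulrBr; lra.
Qed.

Lemma phi_scaledE j (x : R) : phi n j x =
  \sum_(i < n) (1 - (0 + i%:R) * (x / m))^-1
  - \sum_(i < n - j) (1 - (m + i%:R) * (x / m))^-1.
Proof.
have m0 : m != 0 by apply/lt0r_neq0; have := m_ge1; lra.
by rewrite /phi; congr (_ - _); apply: eq_bigr => i _; congr (_^-1); field.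
Qed.

(* With [s = x / m], the trapezoid rule bounds [s] times the first sum from
   below by [- ln (1 - x)] and the midpoint rule bounds [s] times the second
   from above by [ln (1 - x + s / 2) - ln ((1 - x) ^+ 2 + s / 2)]; the
   logarithms combine into [ln (((1 - x) ^+ 2 + s / 2) / ((1 - x) (1 - x + s / 2)))],
   which is nonnegative. *)
Lemma phi_ge0_at_lower j : (1 <= j <= n - 1)%N -> 0 <= phi n j ((j%:R - 1) / m :> R).
Proof.
move=> /andP[j1 jn]; have m1 := m_ge1.
have [->|j2] : j = 1%N \/ (2 <= j)%N by lia.
  by rewrite subrr mul0r phi0 //; lia.
have n1 : (n - 1).+1 = n by lia.
have nm : ((n - 1)%:R : R) = m by rewrite natrB //; lia.
have nj : ((n - j)%:R : R) = n%:R - j%:R by rewrite natrB //; lia.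
have J2 : (2 : R) <= j%:R by rewrite (ler_nat R 2 j).
have Jm := natr_le_m _ jn.
set J := (j%:R : R) in J2 Jm *; set x := (J - 1) / m; set s := x / m.
have x0 : 0 < x by apply: divr_gt0; lra.
have x1 : x < 1 by rewrite ltr_pdivrMr; lra.
have s0 : 0 < s by apply: divr_gt0; lra.
have ms : m * s = x by rewrite /s mulrC divfK //; apply/lt0r_neq0; lra.
have xs : x * x = (J - 1) * s by rewrite /s /x; field; apply/lt0r_neq0; lra.
have first_ge := @sum_inv_affine_ge_ln R s 0 (n - 1) s0.
rewrite n1 nm !add0r mul0r subr0 invr1 ln1 ms in first_ge.
have {}first_ge := first_ge ltac:(lra).
have second_le := @sum_inv_affine_le_ln R s m (n - j) s0.
have upperE : 1 - (m + (n - j)%:R - 2^-1) * s = (1 - x) ^+ 2 + s / 2.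
  rewrite nj.
  have -> : (m + (n%:R - J) - 2^-1) * s = 2 * (m * s) - (J - 1) * s - s / 2 by field.
  by rewrite ms -xs; ring.
have lowerE : 1 - (m - 2^-1) * s = 1 - x + s / 2.
  have -> : (m - 2^-1) * s = m * s - s / 2 by field.
  by rewrite ms; ring.
rewrite upperE lowerE in second_le.
have {}second_le := second_le ltac:(nra).
have ln_comb : ln (1 - x) + ln (1 - x + s / 2) <= ln ((1 - x) ^+ 2 + s / 2).
  rewrite -lnM ?posrE; [|lra|lra].
  rewrite ler_ln ?posrE; [nra|nra|nra].
have corr : 0 <= s / 2 * (1 + (1 - x)^-1).
  have : 0 < (1 - x)^-1 by rewrite invr_gt0; lra.
  by move=> ?; apply: mulr_ge0; lra.
by rewrite phi_scaledE -(pmulr_rge0 _ s0) mulrBr; lra.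
Qed.

(* Symmetric to [phi_ge0_at_lower]: now the midpoint rule bounds the first sum
   from above and the trapezoid rule bounds the second from below; after
   [ln (1 + u) <= u] the remaining terms are those of
   [midpoint_trapezoid_gap_le0] with [q = 1 - x] and [e = 1 / m]. *)
Lemma phi_le0_at_upper j : (1 <= j)%N -> (2 * j + 1 <= n)%N ->
  phi n j (j%:R / m :> R) <= 0.
Proof.
move=> j1 jn; have m1 := m_ge1.
have nj : (n - j - 1).+1 = (n - j)%N by lia.
have nj1 : (n - j - 1 + j + 1)%N = n by lia.
have J1 : (1 : R) <= j%:R by rewrite (ler_nat R 1 j).
have Jm : 2 * (j%:R : R) <= m by rewrite -natrM natr_le_m //; lia.
set J := (j%:R : R) in J1 Jm *; set x := J / m; set s := x / m.
have m0 : m != 0 by apply/lt0r_neq0; lra.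
have x0 : 0 < x by apply: divr_gt0; lra.
have x1 : x <= 2^-1 by rewrite ler_pdivrMr; lra.
have s0 : 0 < s by apply: divr_gt0; lra.
have ms : m * s = x by rewrite /s mulrC divfK.
have xs : x * x = J * s by rewrite /s /x; field.
have s1 : s <= 2^-1 * 2^-1 by rewrite /s ler_pdivrMr; nra.
have first_le := @sum_inv_affine_le_ln R s 0 n s0.
have upperE : 1 - (0 + n%:R - 2^-1) * s = 1 - x - s / 2.
  have -> : (0 + n%:R - 2^-1) * s = m * s + s / 2 by field.
  by rewrite ms; ring.
have lowerE : 1 - (0 - 2^-1) * s = 1 + s / 2 by field.
rewrite upperE lowerE in first_le.
have {}first_le := first_le ltac:(lra).
have second_ge := @sum_inv_affine_ge_ln R s m (n - j - 1) s0.
have njm : ((n - j - 1)%:R : R) = m - J by rewrite -[in RHS]nj1 !natrD /J; ring.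
rewrite nj in second_ge.
have sqE : 1 - (m + (m - J)) * s = (1 - x) ^+ 2.
  have -> : (m + (m - J)) * s = 2 * (m * s) - J * s by ring.
  by rewrite ms -xs; ring.
rewrite njm sqE ms in second_ge.
have {}second_ge := second_ge (exprn_gt0 _ (_ : 0 < 1 - x)).
have ln_sq : ln ((1 - x) ^+ 2) = ln (1 - x) + ln (1 - x).
  by rewrite lnXn; [rewrite mulr2n | lra].
have ln_lo : ln (1 + s / 2) <= s / 2 by apply: le_ln1Dx; lra.
have ln_hi : ln (1 - x) - ln (1 - x - s / 2) <= (s / 2) / (1 - x - s / 2).
  rewrite -ln_div ?posrE; [|lra|lra].
  have -> : (1 - x) / (1 - x - s / 2) = 1 + (s / 2) / (1 - x - s / 2)
    by field; field_nonzero.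
  apply: le_ln1Dx.
  have : 0 <= (s / 2) / (1 - x - s / 2) by apply: divr_ge0; lra.
  lra.
have gap := @midpoint_trapezoid_gap_le0 R (1 - x) s m^-1
  ltac:(apply/andP; split; lra)
  ltac:(apply/andP; split; [rewrite invr_gt0; lra | rewrite lef_pV2 ?posrE; lra])
  ltac:(rewrite /s; ring).
by rewrite phi_scaledE -(pmulr_rle0 _ s0) mulrBr; lra.
Qed.

(* At [x = 1 / 2] the [i]-th term [2 / (1 - i / m)] of the second sum is at most
   the sum of the terms [2 i] and [2 i + 1] of the first one. *)
Lemma phi_ge0_at_half j : n = (j + j)%N -> 0 <= phi n j (2^-1 : R).
Proof.
move=> nE; have nj : (n - j)%N = j by lia.
have m0 : 0 < m by have := m_ge1; lra.
have mE : m = 2 * j%:R - 1 by rewrite nE natrD; ring.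
rewrite /phi subr_ge0 nj.
pose F k := (1 - k%:R / m * 2^-1)^-1.
have -> : \sum_(i < n) F i = \sum_(i < j) (F (i + i)%N + F (i + i).+1).
  by rewrite -sumr_ord_pairs -nE.
apply: ler_sum => i _; rewrite /F.
have iJ : (i%:R : R) + 1 <= j%:R by rewrite natr1 ler_nat.
set u := 1 - i%:R / m.
have u0 : 0 < u by rewrite /u subr_gt0 ltr_pdivrMr // mul1r; lra.
have -> : (1 - 2^-1 - i%:R / m * 2^-1)^-1 = 2 * u^-1 by rewrite /u; field; field_nonzero.
have -> : (1 - (i + i)%:R / m * 2^-1)^-1 = u^-1 by rewrite /u natrD; field; field_nonzero.
set v := 1 - (i + i).+1%:R / m * 2^-1.
have vE : v = u - (2 * m)^-1 by rewrite /v /u -natr1 natrD; field; field_nonzero.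
have v0 : 0 < v.
  rewrite vE /u -(pmulr_lgt0 _ (_ : 0 < 2 * m)); last lra.
  have -> : (1 - i%:R / m - (2 * m)^-1) * (2 * m) = 2 * m - 2 * i%:R - 1
    by field; field_nonzero.
  lra.
have m2 : 0 <= (2 * m)^-1 by rewrite invr_ge0; lra.
have : u^-1 <= v^-1 by rewrite lef_pV2 ?posrE // vE; lra.
lra.
Qed.

Lemma derivable_sum_inv_affine (N : nat) (a b : nat -> R) (x : R) :
  (forall i, (i < N)%N -> a i + b i * x != 0) ->
  derivable (fun y => \sum_(i < N) (a i + b i * y)^-1) x 1.
Proof.
move=> nz; rewrite -fct_sumE; apply: derivable_sum => i.
by apply: derivableV; [exact: nz | have [] := is_derive_affine (a i) (b i) x].
Qed.

Lemma phi_derivable j (x : R) : (j <= n - 1)%N -> 0 <= x ->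
  x * (2 * m - j%:R) < m -> derivable (phi n j) x 1.
Proof.
move=> jn x0 xb; have m1 := m_ge1; have jm := natr_le_m _ jn.
have x1 : x < 1 by nra.
have -> : phi n j = (fun y => \sum_(i < n) (1 + (- (i%:R / m)) * y)^-1)
    - (fun y => \sum_(i < n - j) (1 + (- (1 + i%:R / m)) * y)^-1).
  apply/funext => y; rewrite /phi /=.
  by congr (_ - _); apply: eq_bigr => i _; congr (_^-1); ring.
apply: derivableB.
  apply: (@derivable_sum_inv_affine _ (fun=> 1) (fun i => - (i%:R / m))) => i ilt.
  have /andP[g0 g1] := natr_div_m_ge0_le1 _ ilt.
  by apply/lt0r_neq0; nra.
apply: (@derivable_sum_inv_affine _ (fun=> 1) (fun i => - (1 + i%:R / m))) => i ilt.
have im := natr_le_m_sub _ _ ilt.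
have gm : i%:R / m * m = i%:R by rewrite divfK //; apply/lt0r_neq0; lra.
apply/lt0r_neq0; rewrite -(pmulr_lgt0 _ (_ : 0 < m)); last lra.
have -> : (1 + - (1 + i%:R / m) * x) * m = m - x * m - x * (i%:R / m * m) by ring.
by rewrite gm; nra.
Qed.

Lemma phi_root_exists j : (2 * j + 1 <= n)%N ->
  exists c : R, [/\ 0 <= c, (j%:R - 1) / m <= c <= j%:R / m & phi n j c = 0].
Proof.
move=> jn; have jn1 : (j <= n - 1)%N by lia.
have m1 := m_ge1.
have Jm : 2 * (j%:R : R) <= m by rewrite -natrM natr_le_m //; lia.
have [->|j1] : j = 0%N \/ (1 <= j)%N by lia.
  exists 0; rewrite phi0 // mul0r lexx; split=> //.
  by rewrite ler_pdivrMr; lra.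
have J1 : (1 : R) <= j%:R by rewrite (ler_nat R 1 j).
have lo_hi : (j%:R - 1) / m <= j%:R / m by rewrite ler_pM2r ?invr_gt0; lra.
have lo0 : 0 <= (j%:R - 1) / m by apply: divr_ge0; lra.
have hi_b : j%:R / m * (2 * m - j%:R) < m by rewrite mulrAC ltr_pdivrMr; nra.
have phi_cont : {within `[(j%:R - 1) / m, j%:R / m], continuous (phi n j)}.
  apply: derivable_within_continuous => z; rewrite in_itv /= => /andP[z1 z2].
  have : z * (2 * m - j%:R) <= j%:R / m * (2 * m - j%:R) by apply: ler_wpM2r; lra.
  by move=> zb; apply: phi_derivable; [exact: jn1 | lra | lra].
have sign_change : Num.min (phi n j ((j%:R - 1) / m)) (phi n j (j%:R / m)) <= 0
                   <= Num.max (phi n j ((j%:R - 1) / m)) (phi n j (j%:R / m)).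
  rewrite ge_min le_max phi_le0_at_upper // orbT /=.
  by rewrite phi_ge0_at_lower //; apply/andP.
have [c] := IVT lo_hi phi_cont sign_change.
by rewrite in_itv /= => /andP[c1 c2] pc; exists c; split=> //; [lra | apply/andP].
Qed.

Lemma is_xnj_exists j : (2 * j + 1 <= n)%N -> exists x : R, is_xnj n j x.
Proof.
move=> jn; have jn1 : (j <= n - 1)%N by lia.
have m1 := m_ge1.
have Jm : 2 * (j%:R : R) <= m by rewrite -natrM natr_le_m //; lia.
have [c [c0 /andP[c_lo c_hi] pc]] := phi_root_exists _ jn.
have c_b : c * (2 * m - j%:R) < m.
  have : c * (2 * m - j%:R) <= j%:R / m * (2 * m - j%:R) by apply: ler_wpM2r; lra.
  by rewrite mulrAC ler_pdivlMr; nra.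
exists c; split; first by apply/andP.
- move=> y y0 yc; rewrite ltNge; apply/negP => phi_y.
  by have := phi_single_crossing _ _ _ jn1 y0 yc c_b phi_y; rewrite pc ltxx.
- move=> y y0 cy; rewrite phi_bound_eq ltr_pdivlMr; last lra.
  by move=> y_b; apply: (phi_single_crossing _ _ _ jn1 c0 cy y_b); rewrite pc.
Qed.

Lemma xnj_sign j : (2 * j + 1 <= n)%N ->
  [/\ 0 <= xnj R n j, xnj R n j <= 2^-1,
      (forall y, 0 < y -> y < xnj R n j -> 0 <= phi n j y) &
      (forall y, xnj R n j < y -> y < 2^-1 -> phi n j y <= 0)].
Proof.
move=> jn; have jn' : (j <= n)%N by lia.
have m1 := m_ge1.
have Jm : 2 * (j%:R : R) <= m by rewrite -natrM natr_le_m //; lia.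
have [/andP[_ x_hi] pos neg] : is_xnj n j (xnj R n j).
  by apply: xgetPex; exact: is_xnj_exists _ jn.
have J0 : (0 : R) <= j%:R := ler0n _ _.
have half_b : 2^-1 <= phi_bound R n j by rewrite phi_bound_eq ler_pdivlMr; lra.
have x0 : 0 <= xnj R n j.
  rewrite leNgt; apply/negP => x_neg.
  by have := neg 0 (lexx _) x_neg ltac:(lra); rewrite phi0 // ltNge ler0n.
split=> //.
- by apply: (le_trans x_hi); rewrite ler_pdivrMr; lra.
- by move=> y y0 yx; apply/ltW/pos => //; lra.
- by move=> y xy y2; apply/ltW/neg => //; lra.
Qed.

Lemma phi_ge0_below_half j : (n <= 2 * j)%N -> (j <= n - 1)%N ->
  forall y : R, 0 < y -> y < 2^-1 -> 0 <= phi n j y.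
Proof.
move=> nj jn y y0 y2; have m1 := m_ge1; have Jm := natr_le_m _ jn.
have J1 : (1 : R) <= j%:R by rewrite (ler_nat R 1 j); lia.
have [z [z_half z_b phi_z]] :
    exists z : R, [/\ 2^-1 <= z, z * (2 * m - j%:R) < m & 0 <= phi n j z].
  have [nE|n_lt] : n = (j + j)%N \/ (n + 1 <= 2 * j)%N by lia.
    by exists 2^-1; split; [lra | lra | exact: phi_ge0_at_half].
  have Jn : m + 2 <= 2 * j%:R.
    have : ((n + 1)%:R : R) <= (2 * j)%:R by rewrite ler_nat.
    by rewrite natrD natrM; lra.
  exists ((j%:R - 1) / m); split.
  - by rewrite ler_pdivlMr; lra.
  - by rewrite mulrAC ltr_pdivrMr; nra.
  - by apply: phi_ge0_at_lower; apply/andP; split=> //; lia.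
rewrite leNgt; apply/negP => phi_y.
by have := phi_single_crossing _ _ _ jn (ltW y0) (_ : y < z) z_b (ltW phi_y); lra.
Qed.

End SignOfPhi.

Section ProdAffine.
Context {R : realType}.
Implicit Types (a b : nat -> R) (y : R).

Definition prod_affine (N : nat) a b y : R := \prod_(i < N) (a i + b i * y).

Lemma prod_affineS N a b :
  prod_affine N.+1 a b = prod_affine N a b * (fun y => a N + b N * y).
Proof. by apply/funext => y; rewrite /prod_affine big_ord_recr. Qed.

Lemma prod_affine0 a b : prod_affine 0 a b = cst 1.
Proof. by apply/funext => y; rewrite /prod_affine big_ord0. Qed.

Lemma derivable_prod_affine N a b y : derivable (prod_affine N a b) y 1.
Proof.
elim: N => [|N IH]; first by rewrite prod_affine0; exact: derivable_cst.
rewrite prod_affineS; apply: derivableM IH _.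
by have [] := is_derive_affine (a N) (b N) y.
Qed.

Lemma is_derive_prod_affine N a b y : (forall i, (i < N)%N -> a i + b i * y != 0) ->
  is_derive y 1 (prod_affine N a b)
    (prod_affine N a b y * \sum_(i < N) b i / (a i + b i * y)).
Proof.
elim: N => [|N IH] nz.
  by rewrite prod_affine0 big_ord0 mulr0; exact: is_derive_cst.
rewrite prod_affineS; apply: is_derive_eq (is_deriveM (IH (fun i ilt => nz i (ltnW ilt)))
  (is_derive_affine (a N) (b N) y)) _.
have nzN := nz N (ltnSn N).
by rewrite big_ord_recr !fctE /GRing.scale /=; field.
Qed.

End ProdAffine.

Section LeftHalf.
Context {R : realType}.
Context {n : nat}.
Hypothesis n_ge2 : (2 <= n)%N.
Local Notation m := (n%:R - 1 : R).

Definition pleft (k : nat) (y : R) : R :=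
  'C(n, k)%:R * (prod_affine k (fun=> 0) (fun i => 1 - i%:R / m) y
    * prod_affine (n - k) (fun=> 1) (fun i => - (1 + i%:R / m)) y
    * (prod_affine n (fun=> 1) (fun i => - (i%:R / m)) y)^-1).

Lemma pnk_pleftE k (y : R) : 0 <= y <= 2^-1 -> pnk n k y = pleft k y.
Proof.
move=> /andP[y0 y1]; rewrite /pnk /cpol min_l; last lra.
rewrite /pleft /rising /prod_affine -!mulrA; congr (_ * (_ * (_ * _^-1))).
all: by apply: eq_bigr => i _; ring.
Qed.

Lemma numl_factor_gt0 i k : (k <= n - 1)%N -> (i < k)%N -> 0 < 1 - (i%:R : R) / m.
Proof.
move=> kn ik; have m1 := @m_ge1 R n n_ge2.
have im : ((i.+1)%:R : R) <= m by apply: natr_le_m; lia.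
by rewrite subr_gt0 ltr_pdivrMr ?mul1r -?natr1; lra.
Qed.

Lemma numr_factor_gt0 i (y : R) : (i < n)%N -> 0 <= y < 2^-1 ->
  0 < 1 + - (1 + i%:R / m) * y.
Proof.
move=> ilt /andP[y0 y1].
by have /andP[g0 g1] := @natr_div_m_ge0_le1 R _ n_ge2 _ ilt; nra.
Qed.

Lemma denom_factor_gt0 i (y : R) : (i < n)%N -> 0 <= y < 1 -> 0 < 1 + - (i%:R / m) * y.
Proof.
move=> ilt /andP[y0 y1].
by have /andP[g0 g1] := @natr_div_m_ge0_le1 R _ n_ge2 _ ilt; nra.
Qed.

Lemma logderiv_pleftE k (x : R) : (k <= n - 1)%N -> 0 < x < 2^-1 ->
  x * (\sum_(i < k) (1 - i%:R / m) / (0 + (1 - i%:R / m) * x)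
       + \sum_(i < n - k) - (1 + i%:R / m) / (1 + - (1 + i%:R / m) * x)
       - \sum_(i < n) - (i%:R / m) / (1 + - (i%:R / m) * x)) = phi n k x.
Proof.
move=> kn /andP[x0 x1]; have kn' : (k <= n)%N by lia.
have x_half : 0 <= x < 2^-1 by apply/andP; split; lra.
have x_lt1 : 0 <= x < 1 by apply/andP; split; lra.
rewrite mulrBr mulrDr !mulr_sumr.
have -> : \sum_(i < k) x * ((1 - i%:R / m) / (0 + (1 - i%:R / m) * x)) = \sum_(i < k) 1.
  apply: eq_bigr => i _; move: (numl_factor_gt0 _ _ kn (ltn_ord i)).
  by move: (i%:R / m) => g gt0; field; field_nonzero.
have -> : \sum_(i < n - k) x * (- (1 + i%:R / m) / (1 + - (1 + i%:R / m) * x))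
    = \sum_(i < n - k) (1 - (1 - x - i%:R / m * x)^-1).
  apply: eq_bigr => i _.
  move: (numr_factor_gt0 _ _ (leq_trans (ltn_ord i) (leq_subr k n)) x_half).
  by move: (i%:R / m) => g gt0; field; field_nonzero.
have -> : \sum_(i < n) x * (- (i%:R / m) / (1 + - (i%:R / m) * x))
    = \sum_(i < n) (1 - (1 - i%:R / m * x)^-1).
  apply: eq_bigr => i _.
  move: (denom_factor_gt0 _ _ (ltn_ord i) x_lt1).
  by move: (i%:R / m) => g gt0; field; field_nonzero.
by rewrite !sumrB !sumr_const !card_ord /phi natrB //; ring.
Qed.

Lemma denom_pleft_gt0 (y : R) : 0 <= y < 1 ->
  0 < prod_affine n (fun=> 1) (fun i => - (i%:R / m)) y.
Proof. by move=> y01; apply: prodr_gt0 => i _; exact: denom_factor_gt0. Qed.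

Lemma is_derive_pleft k (x : R) : (k <= n - 1)%N -> 0 < x < 2^-1 ->
  is_derive x 1 (pleft k) (pleft k x * phi n k x / x).
Proof.
move=> kn xb; have /andP[x0 x1] := xb.
have x01 : 0 <= x < 2^-1 by apply/andP; split; lra.
have x_lt1 : 0 <= x < 1 by apply/andP; split; lra.
have d1 := @is_derive_prod_affine R k (fun=> 0) (fun i => 1 - i%:R / m) x
  (fun i ik => ltac:(have := numl_factor_gt0 _ _ kn ik; move=> ?; field_nonzero)).
have d2 := @is_derive_prod_affine R (n - k) (fun=> 1) (fun i => - (1 + i%:R / m)) x
  (fun i ik => ltac:(have := numr_factor_gt0 _ _ (leq_trans ik (leq_subr k n)) x01;
                     move=> ?; field_nonzero)).
have d3 := @is_derive_prod_affine R n (fun=> 1) (fun i => - (i%:R / m)) x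
  (fun i ik => ltac:(have := denom_factor_gt0 _ _ ik x_lt1; move=> ?; field_nonzero)).
have den0 := lt0r_neq0 (denom_pleft_gt0 x x_lt1).
apply: is_derive_eq (is_deriveZ ('C(n, k)%:R) (is_deriveM (is_deriveM d1 d2)
  (is_deriveV (f := prod_affine n (fun=> 1) (fun i => - (i%:R / m))) den0 d3))) _.
rewrite -(logderiv_pleftE _ _ kn xb).
by rewrite /pleft !fctE /GRing.scale /=; field; rewrite den0 andbT; apply/lt0r_neq0.
Qed.

Lemma derivable_pleft k (y : R) : 0 <= y <= 2^-1 -> derivable (pleft k) y 1.
Proof.
move=> /andP[y0 y1].
have den0 := lt0r_neq0 (denom_pleft_gt0 y ltac:(apply/andP; split; lra)).
have -> : pleft k = 'C(n, k)%:R \*: (prod_affine k (fun=> 0) (fun i => 1 - i%:R / m)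
    * prod_affine (n - k) (fun=> 1) (fun i => - (1 + i%:R / m))
    * (fun y => (prod_affine n (fun=> 1) (fun i => - (i%:R / m)) y)^-1)) by [].
apply/derivableZ/derivableM; first by apply: derivableM; exact: derivable_prod_affine.
exact: derivableV den0 (derivable_prod_affine _ _ _ _).
Qed.

Lemma pleft_ge0 k (x : R) : (k <= n - 1)%N -> 0 < x < 2^-1 -> 0 <= pleft k x.
Proof.
move=> kn /andP[x0 x1].
have den := denom_pleft_gt0 x ltac:(apply/andP; split; lra).
rewrite /pleft; apply: mulr_ge0 => //; apply: mulr_ge0; last by rewrite invr_ge0 ltW.
apply: mulr_ge0; apply: prodr_ge0 => i ilt.
  by rewrite add0r; apply: mulr_ge0; [exact/ltW/(numl_factor_gt0 _ _ kn) | lra].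
apply/ltW/numr_factor_gt0; first exact: leq_trans (ltn_ord i) (leq_subr k n).
by apply/andP; split; lra.
Qed.

Lemma pnk_ndecr_of_phi_ge0 k (a b : R) : (k <= n - 1)%N -> 0 <= a -> b <= 2^-1 ->
  (forall y, a < y -> y < b -> 0 <= phi n k y) ->
  forall x y, a <= x -> x <= y -> y <= b -> pnk n k x <= pnk n k y.
Proof.
move=> kn a0 b1 phi_ge0 x y ax xy yb.
rewrite !pnk_pleftE; [|apply/andP; split; lra..].
apply: (@is_derive_ge0_ndecr _ (pleft k) (fun z => pleft k z * phi n k z / z) a b) => //.
- by move=> z /andP[z1 z2]; apply: derivable_pleft; apply/andP; split; lra.
- by move=> z /andP[z1 z2]; apply: is_derive_pleft => //; apply/andP; split; lra.
- move=> z /andP[z1 z2]; apply: divr_ge0; last lra.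
  apply: mulr_ge0; last exact: phi_ge0.
  by apply: pleft_ge0 => //; apply/andP; split; lra.
Qed.

Lemma pnk_nincr_of_phi_le0 k (a b : R) : (k <= n - 1)%N -> 0 <= a -> b <= 2^-1 ->
  (forall y, a < y -> y < b -> phi n k y <= 0) ->
  forall x y, a <= x -> x <= y -> y <= b -> pnk n k y <= pnk n k x.
Proof.
move=> kn a0 b1 phi_le0 x y ax xy yb.
rewrite !pnk_pleftE; [|apply/andP; split; lra..].
apply: (@is_derive_le0_nincr _ (pleft k) (fun z => pleft k z * phi n k z / z) a b) => //.
- by move=> z /andP[z1 z2]; apply: derivable_pleft; apply/andP; split; lra.
- by move=> z /andP[z1 z2]; apply: is_derive_pleft => //; apply/andP; split; lra.
- move=> z /andP[z1 z2]; apply: mulr_le0_ge0; last by rewrite invr_ge0; lra.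
  apply: mulr_ge0_le0; last exact: phi_le0.
  by apply: pleft_ge0 => //; apply/andP; split; lra.
Qed.

Lemma pnkn_eq0 (y : R) : 0 <= y <= 2^-1 -> pnk n n y = 0.
Proof.
move=> y01; have n1 : (n - 1 < n)%N by lia.
have m0 : m != 0 by apply/lt0r_neq0; have := @m_ge1 R n n_ge2; lra.
rewrite pnk_pleftE // /pleft /prod_affine (bigD1 (Ordinal n1)) //= natrB; last lia.
by rewrite divff // subrr mul0r add0r !mul0r mulr0.
Qed.

End LeftHalf.

Lemma pnk_sym (R : realType) n k (y : R) : (k <= n)%N ->
  pnk n k (1 - y) = pnk n (n - k) y.
Proof.
by move=> kn; rewrite /pnk /cpol subKr minC bin_sub // subKn //; ring.
Qed.

Lemma natr_le_half_predE (F : realFieldType) (n k : nat) :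
  (k%:R <= (n%:R - 1) / 2 :> F) = (2 * k + 1 <= n)%N.
Proof. by rewrite ler_pdivlMr // -(ler_nat F) natrD natrM; apply/idP/idP; lra. Qed.

Lemma natr_lt_half_succE (F : realFieldType) (n k : nat) :
  (k%:R < (n%:R + 1) / 2 :> F) = (2 * k < n + 1)%N.
Proof. by rewrite ltr_pdivlMr // -(ltr_nat F) natrD natrM; apply/idP/idP; lra. Qed.

Section Unimodality.
Context {R : realType}.
Context {n : nat}.
Hypothesis n_ge2 : (2 <= n)%N.

Lemma pnk_flip k (x : R) : (k <= n)%N -> pnk n k x = pnk n (n - k) (1 - x).
Proof. by move=> kn; rewrite -pnk_sym // subKr. Qed.

Lemma pnk_ndecr_left_half k : (n <= 2 * k)%N -> (k <= n)%N ->
  forall x y : R, 0 <= x -> x <= y -> y <= 2^-1 -> pnk n k x <= pnk n k y.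
Proof.
move=> nk kn x y x0 xy y1.
have [->|kn1] : k = n \/ (k <= n - 1)%N by lia.
  by rewrite !pnkn_eq0 //; apply/andP; split; lra.
apply: (pnk_ndecr_of_phi_ge0 n_ge2 _ _ _ kn1 (lexx 0) (lexx 2^-1)) => // z z0 z1.
exact: phi_ge0_below_half.
Qed.

Lemma pnk_unimodal_xnj k : (2 * k + 1 <= n)%N ->
  (forall x y : R, 0 <= x -> x <= y -> y <= xnj R n k -> pnk n k x <= pnk n k y) /\
  (forall x y : R, xnj R n k <= x -> x <= y -> y <= 1 -> pnk n k y <= pnk n k x).
Proof.
move=> kn; have kn1 : (k <= n - 1)%N by lia.
have kn' : (k <= n)%N by lia.
have [x0 x_half pos neg] := xnj_sign (R := R) n_ge2 _ kn.
split; first exact: (pnk_ndecr_of_phi_ge0 n_ge2 _ _ _ kn1 (lexx 0) x_half).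
have left_decr (x y : R) :
    xnj R n k <= x -> x <= y -> y <= 2^-1 -> pnk n k y <= pnk n k x.
  exact: (pnk_nincr_of_phi_le0 n_ge2 _ _ _ kn1 x0 (lexx _)).
have right_decr (x y : R) :
    2^-1 <= x -> x <= y -> y <= 1 -> pnk n k y <= pnk n k x.
  move=> x_half' xy y1; rewrite !(pnk_flip _ _ kn').
  by apply: pnk_ndecr_left_half; [lia | lia | lra | lra | lra].
move=> x y xx xy y1.
have [y_half|y_half] := lerP y 2^-1; first exact: left_decr.
have [x_half'|x_half'] := lerP 2^-1 x; first exact: right_decr.
apply: (@le_trans _ _ (pnk n k (2^-1 : R))).
  by apply: right_decr; lra.
by apply: left_decr; lra.
Qed.

End Unimodality.

Theorem theorem3p1 (R : realType) (n k : nat) (hn : (2 <= n)%N) (hk : (k <= n)%N) :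
  (forall x y : R, 0 <= x -> x <= y -> y <= xstar R n k -> pnk n k x <= pnk n k y) /\
  (forall x y : R, xstar R n k <= x -> x <= y -> y <= 1 -> pnk n k y <= pnk n k x).
Proof.
rewrite /xstar natr_le_half_predE natr_lt_half_succE.
have [small|not_small] := boolP (2 * k + 1 <= n)%N; first exact: pnk_unimodal_xnj.
have [middle|large] := boolP (2 * k < n + 1)%N.
  have nk : (n - k)%N = k by lia.
  rewrite div1r; split=> x y x0 xy y1.
    by apply: pnk_ndecr_left_half => //; lia.
  rewrite !(pnk_flip _ _ hk) nk.
  by apply: pnk_ndecr_left_half => //; [lia | lra | lra | lra].
have [incr decr] := pnk_unimodal_xnj (R := R) hn (n - k) ltac:(lia).
split=> x y x0 xy y1; rewrite !(pnk_flip _ _ hk); [apply: decr | apply: incr]; lra.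
Qed.
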